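(* Let $H=\sum_ic_iP_i$ be a Pauli Hamiltonian, $|\psi\rangle$ a state, $\mathcal{G}=(G^{[1]},\dots,G^{[m]})$ an overlapped grouping of $H$ and $M_1,\dots,M_m$ positive shot counts. Assume (1) the shot batches of different groups are independent, and (2) for every group $G^{[j]}$ and all distinct $P_i,P_k\in G^{[j]}$, $\mathrm{Cov}(\overline{\langle P_i\rangle}_{(j)},\overline{\langle P_k\rangle}_{(j)})=0$. Then among all unbiased energy estimators $\overline{E}_{\mathcal{G}}(w)=\sum_ic_i\sum_{j\in\Gamma(i)}w_{i,j}\overline{\langle P_i\rangle}_{(j)}$ with $\sum_{j\in\Gamma(i)}w_{i,j}=1$ for every $i$, the minimum variance is attained by the weights $w_{i,j}=M_j/\sum_{k\in\Gamma(i)}M_k$.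
   Context: A Pauli Hamiltonian is $H=\sum_{i=1}^Nc_iP_i$ with real nonzero $c_i$ and distinct $n$-qubit Pauli strings. An overlapped grouping is a list of sets of mutually commuting operators from $\{P_1,\dots,P_N\}$ whose union is $\{P_1,\dots,P_N\}$ (not necessarily disjoint). Group $G^{[j]}$ is measured in $M_j$ independent shots, each shot giving simultaneous $\pm1$ outcomes of all its operators with the Born-rule distribution for $|\psi\rangle$; $\overline{\langle P_i\rangle}_{(j)}$ is the sample mean of the outcomes of $P_i$ over those $M_j$ shots (variance $(1-\langle P_i\rangle^2)/M_j$). $\Gamma(i)=\{j:P_i\in G^{[j]}\}$. *)

From mathcomp Require Import all_boot all_order all_algebra.
Set Implicit Arguments. Unset Strict Implicit. Unset Printing Implicit Defensive.
Import Order.TTheory GRing.Theory Num.Theory.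
Local Open Scope ring_scope.

(** Pauli strings on n qubits: each letter in 'I_4 with 0 = I, 1 = X, 2 = Y, 3 = Z. *)
Definition pauli (n : nat) := n.-tuple 'I_4.

Definition pauli_commute (n : nat) (P Q : pauli n) : bool :=
  ~~ odd #|[set k : 'I_n | (tnth P k != ord0) && (tnth Q k != ord0)
                            && (tnth P k != tnth Q k)]|.

Definition overlapped_grouping (n N m : nat) (Ps : 'I_N -> pauli n)
  (G : 'I_m -> {set 'I_N}) : Prop :=
  (forall j, forall i k, i \in G j -> k \in G j -> pauli_commute (Ps i) (Ps k))
  /\ (forall i, exists j, i \in G j).

Section FinProb.
Variables (R : realFieldType) (T : finType).

Definition is_distr (p : T -> R) : Prop :=
  (forall t, 0 <= p t) /\ \sum_t p t = 1.

Definition Prob (p : T -> R) (A : pred T) : R := \sum_(t | A t) p t.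
Definition Ex (p : T -> R) (X : T -> R) : R := \sum_t p t * X t.
Definition Cov (p : T -> R) (X Y : T -> R) : R :=
  Ex p (fun t => (X t - Ex p X) * (Y t - Ex p Y)).
Definition Var (p : T -> R) (X : T -> R) : R := Cov p X X.

(** Mutual independence of the random vectors
    (Xbar i j)_{i in G j}, one vector per group j. *)
Definition groups_independent (N m : nat) (p : T -> R) (G : 'I_m -> {set 'I_N})
  (Xbar : 'I_N -> 'I_m -> T -> R) : Prop :=
  forall A : 'I_m -> 'I_N -> pred R,
    Prob p (fun t => [forall j, [forall i, (i \in G j) ==> A j i (Xbar i j t)]])
    = \prod_j Prob p (fun t => [forall i, (i \in G j) ==> A j i (Xbar i j t)]).
End FinProb.

Definition estimator (R : realFieldType) (T : finType) (N m : nat)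
  (c : 'I_N -> R) (G : 'I_m -> {set 'I_N}) (w : 'I_N -> 'I_m -> R)
  (Xbar : 'I_N -> 'I_m -> T -> R) : T -> R :=
  fun t => \sum_i c i * \sum_(j | i \in G j) w i j * Xbar i j t.

Definition w_opt (R : realFieldType) (N m : nat) (M : 'I_m -> nat)
  (G : 'I_m -> {set 'I_N}) : 'I_N -> 'I_m -> R :=
  fun i j => (M j)%:R / \sum_(k | i \in G k) (M k)%:R.

From mathcomp Require Import all_boot all_order all_algebra ring lra.
Set Implicit Arguments. Unset Strict Implicit. Unset Printing Implicit Defensive.
Import Order.TTheory GRing.Theory Num.Theory.
Local Open Scope ring_scope.

(* The estimator is a linear combination of the sample means Xbar i j over the
   pairs (i, j) with i in G j.  Distinct pairs are uncorrelated (same group: by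
   hypothesis; different groups: by independence), so its variance is
   sum_i c_i^2 (1 - e_i^2) sum_(j in Gamma(i)) w_ij^2 / M_j.  For each i the inner
   sum is minimised under sum_j w_ij = 1 by completing the square:
   sum_j w_j^2 / M_j = 1/S + sum_j (w_j - M_j/S)^2 / M_j with S = sum_j M_j. *)

Section FinProb.
Variables (R : realFieldType) (T : finType) (p : T -> R).

Definition indep_rv (X Y : T -> R) : Prop :=
  forall a b, Prob p (fun t => (X t == a) && (Y t == b)) =
              Prob p (fun t => X t == a) * Prob p (fun t => Y t == b).

Lemma eq_Ex (X Y : T -> R) : X =1 Y -> Ex p X = Ex p Y.
Proof. by move=> eqXY; apply: eq_bigr => t _; rewrite eqXY. Qed.

Lemma eq_Var (X Y : T -> R) : X =1 Y -> Var p X = Var p Y.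
Proof.
by move=> eqXY; rewrite /Var /Cov (eq_Ex eqXY); apply: eq_Ex => t; rewrite eqXY.
Qed.

Lemma Ex_sum (I : finType) (P : pred I) (X : I -> T -> R) :
  Ex p (fun t => \sum_(u | P u) X u t) = \sum_(u | P u) Ex p (X u).
Proof. by rewrite /Ex; under eq_bigr do rewrite mulr_sumr; exact: exchange_big. Qed.

Lemma ExZ a (X : T -> R) : Ex p (fun t => a * X t) = a * Ex p X.
Proof. by rewrite /Ex mulr_sumr; apply: eq_bigr => t _; rewrite mulrCA. Qed.

Lemma Var_lincomb (I : finType) (P : pred I) (a : I -> R) (X : I -> T -> R) :
  Var p (fun t => \sum_(u | P u) a u * X u t) =
  \sum_(u | P u) \sum_(v | P v) a u * a v * Cov p (X u) (X v).
Proof.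
rewrite /Var /Cov Ex_sum; under eq_bigr do rewrite ExZ.
rewrite (@eq_Ex _ (fun t => \sum_(u | P u) \sum_(v | P v)
    a u * a v * ((X u t - Ex p (X u)) * (X v t - Ex p (X v))))); last first.
  move=> t; rewrite -sumrB mulr_suml; apply: eq_bigr => u _.
  by rewrite mulr_sumr; apply: eq_bigr => v _; rewrite -!mulrBr; ring.
rewrite Ex_sum; apply: eq_bigr => u _.
by rewrite Ex_sum; apply: eq_bigr => v _; rewrite ExZ.
Qed.

Lemma Var_lincomb_uncorrelated (I : finType) (P : pred I) (a : I -> R)
    (X : I -> T -> R) :
  (forall u v, P u -> P v -> u != v -> Cov p (X u) (X v) = 0) ->
  Var p (fun t => \sum_(u | P u) a u * X u t) = \sum_(u | P u) a u ^+ 2 * Var p (X u).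
Proof.
move=> uncorr; rewrite Var_lincomb; apply: eq_bigr => u Pu.
rewrite (bigD1 u) //= big1 ?addr0 => [|v /andP[Pv neq_vu]]; first by rewrite -expr2.
by rewrite uncorr ?mulr0 // eq_sym.
Qed.

Lemma sum_by_values (Z F : T -> R) :
  \sum_t F t = \sum_(a <- undup (map Z (enum T))) \sum_t (Z t == a)%:R * F t.
Proof.
rewrite exchange_big /=; apply: eq_bigr => t _.
rewrite (bigD1_seq (Z t)) /= ?undup_uniq ?mem_undup ?map_f ?mem_enum //.
rewrite eqxx mul1r big1 ?addr0 // => a.
by rewrite eq_sym => /negbTE ->; rewrite mul0r.
Qed.

Lemma ProbE (A : pred T) : Prob p A = \sum_t (A t)%:R * p t.
Proof.
by rewrite /Prob big_mkcond; apply: eq_bigr => t _; case: (A t); rewrite ?mul1r ?mul0r.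
Qed.

Lemma Ex_by_values (Z : T -> R) :
  Ex p Z = \sum_(a <- undup (map Z (enum T))) a * Prob p (fun t => Z t == a).
Proof.
rewrite /Ex (sum_by_values Z); apply: eq_big_seq => a _.
rewrite ProbE mulr_sumr; apply: eq_bigr => t _.
by case: eqP => [->|_]; rewrite ?mul1r ?mul0r ?mulr0 // mulrC.
Qed.

Lemma ExM_indep (X Y : T -> R) :
  indep_rv X Y -> Ex p (fun t => X t * Y t) = Ex p X * Ex p Y.
Proof.
move=> indepXY; rewrite (Ex_by_values X) (Ex_by_values Y) mulr_suml.
rewrite /Ex (sum_by_values X); apply: eq_big_seq => a _.
rewrite (sum_by_values Y) mulr_sumr; apply: eq_big_seq => b _.
rewrite mulrACA -indepXY ProbE mulr_sumr; apply: eq_bigr => t _.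
by case: (eqP (x := X t)) => [->|_]; case: (eqP (x := Y t)) => [->|_] /=; ring.
Qed.

Hypothesis p_sum1 : \sum_t p t = 1.

Lemma CovE (X Y : T -> R) :
  Cov p X Y = Ex p (fun t => X t * Y t) - Ex p X * Ex p Y.
Proof.
rewrite /Cov {1}/Ex (eq_bigr (fun t => p t * (X t * Y t) - Ex p Y * (p t * X t)
    - Ex p X * (p t * Y t) + Ex p X * Ex p Y * p t)) => [|t _]; last by ring.
by rewrite !big_split /= !sumrN -!mulr_sumr p_sum1 /Ex; ring.
Qed.

Lemma Cov_indep (X Y : T -> R) : indep_rv X Y -> Cov p X Y = 0.
Proof. by move=> indepXY; rewrite CovE ExM_indep ?subrr. Qed.

End FinProb.

Lemma forall_except2 (I : finType) (Q : pred I) i0 i1 :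
  (forall i, i != i0 -> i != i1 -> Q i) -> [forall i, Q i] = Q i0 && Q i1.
Proof.
move=> Qelse; apply/forallP/andP => [Q_ | [Qi0 Qi1] i]; first by split; apply: Q_.
by case: (eqVneq i i0) => [-> // | ?]; case: (eqVneq i i1) => [-> // | ?]; apply: Qelse.
Qed.

Lemma forall_implyE1 (I : finType) (P Q : pred I) i0 :
  P i0 -> (forall i, i != i0 -> Q i) -> [forall i, P i ==> Q i] = Q i0.
Proof.
move=> Pi0 Qelse; rewrite (@forall_except2 _ _ i0 i0) ?Pi0 ?andbb // => i neq_i _.
by rewrite Qelse ?implybT.
Qed.

Lemma groups_independent_indep_rv (R : realFieldType) (T : finType) (p : T -> R)
    (N m : nat) (G : 'I_m -> {set 'I_N}) (Xbar : 'I_N -> 'I_m -> T -> R) :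
  \sum_t p t = 1 -> groups_independent p G Xbar ->
  forall i k j0 j1, j0 != j1 -> i \in G j0 -> k \in G j1 ->
  indep_rv p (Xbar i j0) (Xbar k j1).
Proof.
move=> p_sum1 indepG i k j0 j1 neq_j01 iGj0 kGj1 a b.
pose A j i' (x : R) := if (j, i') == (j0, i) then x == a
                       else if (j, i') == (j1, k) then x == b else true.
pose E j t := [forall i', (i' \in G j) ==> A j i' (Xbar i' j t)].
have neq_j10 : j1 != j0 by rewrite eq_sym.
have E_j0 t : E j0 t = (Xbar i j0 t == a).
  rewrite /E (forall_implyE1 iGj0) => [|i' neq_i']; first by rewrite /A eqxx.
  by rewrite /A !xpair_eqE eqxx (negbTE neq_i') (negbTE neq_j01).
have E_j1 t : E j1 t = (Xbar k j1 t == b).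
  rewrite /E (forall_implyE1 kGj1) => [|k' neq_k'].
    by rewrite /A !xpair_eqE (negbTE neq_j10) !eqxx.
  by rewrite /A !xpair_eqE eqxx (negbTE neq_k') (negbTE neq_j10).
have E_else j t : j != j0 -> j != j1 -> E j t.
  move=> neq_j0 neq_j1; apply/forallP => i'; apply/implyP => _.
  by rewrite /A !xpair_eqE (negbTE neq_j0) (negbTE neq_j1).
have joint t : [forall j, E j t] = (Xbar i j0 t == a) && (Xbar k j1 t == b).
  by rewrite (@forall_except2 _ (E^~ t) j0 j1) ?E_j0 ?E_j1 // => j; apply: E_else.
have := indepG A; rewrite /Prob (eq_bigl _ _ joint) => ->.
rewrite (bigD1 j0) // (bigD1 j1) //= [\prod_(_ | _) _]big1 ?mulr1
  => [|j /andP[neq_j0 neq_j1]].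
  by congr (_ * _); apply: eq_bigl => t; [exact: E_j0 | exact: E_j1].
by rewrite -p_sum1; apply: eq_bigl => t; apply: E_else.
Qed.

Lemma Var_estimator (R : realFieldType) (T : finType) (p : T -> R) (N m : nat)
    (c : 'I_N -> R) (G : 'I_m -> {set 'I_N}) (w : 'I_N -> 'I_m -> R)
    (Xbar : 'I_N -> 'I_m -> T -> R) :
  \sum_t p t = 1 -> groups_independent p G Xbar ->
  (forall j i k, i \in G j -> k \in G j -> i != k -> Cov p (Xbar i j) (Xbar k j) = 0) ->
  Var p (estimator c G w Xbar) =
  \sum_i \sum_(j | i \in G j) (c i * w i j) ^+ 2 * Var p (Xbar i j).
Proof.
move=> p_sum1 indepG uncorr_group.
have pairs t : estimator c G w Xbar t = \sum_(u : 'I_N * 'I_m | u.1 \in G u.2)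
    c u.1 * w u.1 u.2 * Xbar u.1 u.2 t.
  rewrite /estimator; under eq_bigr do rewrite mulr_sumr.
  under eq_bigr do under eq_bigr do rewrite mulrA.
  exact: (pair_big_dep xpredT (fun i j => i \in G j)).
rewrite (eq_Var p pairs) Var_lincomb_uncorrelated => [|[i j] [k l] /=].
  by rewrite (pair_big_dep xpredT (fun i j => i \in G j)).
have [<- iGj kGj neq_pair | neq_jl iGj kGl _] := eqVneq j l.
  by apply: uncorr_group iGj kGj _; apply: contra_neq neq_pair => ->.
exact/Cov_indep/groups_independent_indep_rv.
Qed.

Lemma proportional_weights_min (R : realFieldType) (I : finType) (P : pred I)
    (M w : I -> R) :
  (forall j, P j -> 0 < M j) -> 0 < \sum_(j | P j) M j -> \sum_(j | P j) w j = 1 ->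
  \sum_(j | P j) (M j / \sum_(k | P k) M k) ^+ 2 / M j <= \sum_(j | P j) w j ^+ 2 / M j.
Proof.
set S := \sum_(k | P k) M k => M_gt0 S_gt0 w_sum1.
have M_neq0 j : P j -> M j != 0 by move/M_gt0; rewrite lt0r => /andP[].
have S_neq0 : S != 0 by rewrite gt_eqF.
have opt_val : \sum_(j | P j) (M j / S) ^+ 2 / M j = S^-1.
  rewrite (eq_bigr (fun j => M j / S ^+ 2)) => [|j Pj].
    by rewrite -mulr_suml -/S; field.
  by field; rewrite S_neq0 M_neq0.
have square : \sum_(j | P j) (w j - M j / S) ^+ 2 / M j =
    \sum_(j | P j) w j ^+ 2 / M j - 2 / S * \sum_(j | P j) w j
    + \sum_(j | P j) (M j / S) ^+ 2 / M j.
  rewrite mulr_sumr -sumrB -big_split /=; apply: eq_bigr => j Pj.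
  by field; rewrite S_neq0 M_neq0.
have : 0 <= \sum_(j | P j) (w j - M j / S) ^+ 2 / M j.
  by apply: sumr_ge0 => j Pj; rewrite divr_ge0 ?sqr_ge0 ?ltW ?M_gt0.
have two_inv : 2 / S * 1 = S^-1 + S^-1 by field.
by rewrite square w_sum1 two_inv opt_val; lra.
Qed.

Theorem lemma1 (R : realFieldType) (n N m : nat)
  (Ps : 'I_N -> pauli n) (c : 'I_N -> R) (G : 'I_m -> {set 'I_N})
  (M : 'I_m -> nat) (e : 'I_N -> R)
  (T : finType) (p : T -> R) (Xbar : 'I_N -> 'I_m -> T -> R) :
  injective Ps ->
  (forall i, c i != 0) ->
  overlapped_grouping Ps G ->
  (forall j, (0 < M j)%N) ->
  (forall i, -1 <= e i <= 1) ->
  is_distr p ->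
  (forall i j, i \in G j -> Ex p (Xbar i j) = e i) ->
  (forall i j, i \in G j -> Var p (Xbar i j) = (1 - e i ^+ 2) / (M j)%:R) ->
  groups_independent p G Xbar ->
  (forall j i k, i \in G j -> k \in G j -> i != k ->
     Cov p (Xbar i j) (Xbar k j) = 0) ->
  (forall i, \sum_(j | i \in G j) w_opt R M G i j = 1) /\
  (forall w : 'I_N -> 'I_m -> R,
     (forall i, \sum_(j | i \in G j) w i j = 1) ->
     Var p (estimator c G (w_opt R M G) Xbar) <= Var p (estimator c G w Xbar)).
Proof.
move=> _ _ [_ cover] M_gt0 e_bound [_ p_sum1] _ Var_Xbar indepG uncorr.
have S_gt0 i : 0 < \sum_(k | i \in G k) (M k)%:R :> R.
  have [j iGj] := cover i; rewrite (bigD1 j) //=.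
  by apply: ltr_wpDr; [apply: sumr_ge0 => k _ | rewrite ltr0n].
have Var_E w : Var p (estimator c G w Xbar) =
    \sum_i c i ^+ 2 * (1 - e i ^+ 2) * \sum_(j | i \in G j) w i j ^+ 2 / (M j)%:R.
  rewrite Var_estimator //; apply: eq_bigr => i _; rewrite mulr_sumr.
  by apply: eq_bigr => j iGj; rewrite Var_Xbar // exprMn; ring.
split=> [i | w w_sum1].
  by rewrite /w_opt -mulr_suml divff ?gt_eqF.
rewrite !Var_E; apply: ler_sum => i _; apply: ler_wpM2l.
  by have /andP[? ?] := e_bound i; rewrite mulr_ge0 ?sqr_ge0 //; nra.
by apply: proportional_weights_min => // j _; rewrite ltr0n.
Qed.
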